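(* Let $m\ge 2$, $\rho\ge 0$, and consider the Mallows culture on candidates $\{1,\dots,m\}$ with reference ranking $(m,m-1,\dots,1)$ (candidate $m$ first) and concentration parameter $\rho$. With $\boldsymbol\beta=(\frac12,\dots,\frac12)$, the log saddle point is \[ \boldsymbol\tau=\Big(\frac{m\rho}{2},\frac{(m-2)\rho}{2},\dots,\frac{(-m+4)\rho}{2}\Big), \] i.e. $\tau_j=\frac{(m-2(j-1))\rho}{2}$ for $j=1,\dots,m-1$.
   Context: Mallows culture with reference ranking $r_0$ and parameter $\rho\ge0$: a ranking $r$ has probability $p_r=\gamma e^{-\rho d(r,r_0)}$ where $d$ is the Kendall tau distance (number of pairs of candidates ordered differently in $r$ and $r_0$) and $\gamma$ normalizes $\sum_rp_r=1$. Let $\mathcal{A}=\{1,\dots,m-1\}$; for $\mathcal{X}\subseteq\mathcal{A}$, $p_{\mathcal{X}}$ is the probability that the set of candidates ranked above $m$ is exactly $\mathcal{X}$, and $P(\mathbf{x})=\sum_{\mathcal{X}\subseteq\mathcal{A}}p_{\mathcal{X}}\prod_{j\in\mathcal{X}}x_j$. With $K(\mathbf{t})=\log P(e^{t_1},\dots,e^{t_{m-1}})$, the log saddle point $\boldsymbol\tau$ is the unique maximizer over $\mathbb{R}^{m-1}$ of $-K(\mathbf{t})+\boldsymbol\beta^T\mathbf{t}$. *)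

From HB Require Import structures.
From mathcomp Require Import all_boot all_order all_algebra all_fingroup.
From mathcomp Require Import reals sequences exp.
Set Implicit Arguments. Unset Strict Implicit. Unset Printing Implicit Defensive.
Import Order.TTheory GRing.Theory Num.Theory.
Local Open Scope ring_scope.

(* Candidates {1,...,m} are represented by 'I_m : index c stands for candidate c+1.
   A ranking is a permutation r : {perm 'I_m}; r c is the position (0 = top)
   of candidate c+1. *)

Definition kendall (k : nat) (r r' : {perm 'I_k}) : nat :=
  #|[set p : 'I_k * 'I_k | (p.1 < p.2)%N &&
       ((r p.1 < r p.2)%N != (r' p.1 < r' p.2)%N)]|.

(* Reference ranking (m, m-1, ..., 1): candidate c+1 is at position m-1-c. *)
Definition ref_rank (k : nat) : {perm 'I_k} := perm (@rev_ord_inj k).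

Definition mallows_prob (R : realType) (k : nat) (rho : R) (r : {perm 'I_k}) : R :=
  expR (- rho * (kendall r (ref_rank k))%:R)
  / \sum_(s : {perm 'I_k}) expR (- rho * (kendall s (ref_rank k))%:R).

(* From here on m = n.+1 candidates: candidate m is ord_max, and the
   candidates of A = {1,...,m-1} are indexed by j : 'I_n (candidate j+1). *)
Definition candA (n : nat) (j : 'I_n) : 'I_n.+1 := widen_ord (leqnSn n) j.

Definition above (n : nat) (r : {perm 'I_n.+1}) : {set 'I_n} :=
  [set j | (r (candA j) < r ord_max)%N].

Definition pX (R : realType) (n : nat) (rho : R) (X : {set 'I_n}) : R :=
  \sum_(r : {perm 'I_n.+1} | above r == X) mallows_prob rho r.

Definition Ppoly (R : realType) (n : nat) (rho : R) (x : 'I_n -> R) : R :=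
  \sum_(X : {set 'I_n}) pX rho X * \prod_(j in X) x j.

Definition Kcgf (R : realType) (n : nat) (rho : R) (t : 'I_n -> R) : R :=
  ln (Ppoly rho (fun j => expR (t j))).

Definition saddle_obj (R : realType) (n : nat) (rho : R) (beta t : 'I_n -> R) : R :=
  - Kcgf rho t + \sum_(j < n) beta j * t j.

Definition is_log_saddle_point (R : realType) (n : nat) (rho : R)
    (beta tau : 'I_n -> R) : Prop :=
  (forall t, saddle_obj rho beta t <= saddle_obj rho beta tau) /\
  (forall t, (forall s, saddle_obj rho beta s <= saddle_obj rho beta t) ->
     forall j, t j = tau j).

From HB Require Import structures.
From mathcomp Require Import all_boot all_order all_algebra all_fingroup.
From mathcomp Require Import reals sequences exp.
From mathcomp Require Import zify ring lra.
Import Order.TTheory GRing.Theory Num.Theory.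
Set Implicit Arguments. Unset Strict Implicit. Unset Printing Implicit Defensive.
Local Open Scope ring_scope.

(* Exchanging, in a ranking, the block of candidates ranked above m with the
   block ranked below it (each block keeping its internal order) is an
   involution on rankings.  It replaces the set X of candidates above m by its
   complement and changes rho times the Kendall distance to the reference by
   exactly tau(X^c) - tau(X), where tau(Y) is the sum of the tau_j over Y.
   Hence the tilted weights w_X = p_X exp(tau(X)) satisfy w_(X^c) = w_X.
   Writing t = tau + u, the objective is
     - log (sum_X w_X exp(u(X))) + u(A)/2 + const,
   and pairing X with X^c, AM-GM gives
     sum_X w_X exp(u(X)) >= exp(u(A)/2) sum_X w_X,
   so tau is a maximizer.  Equality forces u(X) = u(X^c) whenever w_X > 0, in
   particular for the initial segments X = {1, ..., k} (each is the set above m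
   of some ranking), and this forces u = 0. *)

Lemma sumr_setC (R : nmodType) (T : finType) (X : {set T}) (u : T -> R) :
  \sum_(j in X) u j + \sum_(j in ~: X) u j = \sum_j u j.
Proof.
by rewrite [RHS](bigID (mem X)) /=; congr (_ + _); apply: eq_bigl => j; rewrite inE.
Qed.

Lemma psumr_gt0 (R : numDomainType) (I : finType) (F : I -> R) (i : I) :
  (forall j, 0 <= F j) -> 0 < F i -> 0 < \sum_j F j.
Proof. by move=> F_ge0 Fi_gt0; rewrite (bigD1 i) //= ltr_wpDr // sumr_ge0. Qed.

Lemma sum_pairs_sub (R : comNzRingType) (N : nat) (s : nat -> R) :
  \sum_(0 <= a < N) \sum_(0 <= b < N) (a < b)%N%:R * (s a - s b) =
  \sum_(0 <= a < N) s a * (N%:R - 1 - 2 * a%:R).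
Proof.
elim: N => [|N IH]; first by rewrite !big_geq.
have inner_last a : (0 <= a < N)%N ->
    \sum_(0 <= b < N.+1) (a < b)%N%:R * (s a - s b) =
    \sum_(0 <= b < N) (a < b)%N%:R * (s a - s b) + (s a - s N).
  by move=> /= ltaN; rewrite big_nat_recr //= ltaN mul1r.
have outer_last0 : \sum_(0 <= b < N.+1) (N < b)%N%:R * (s N - s b) = 0.
  apply: big1_seq => b /andP[_]; rewrite mem_index_iota => /andP[_ ltbN].
  by rewrite ltnNge -ltnS ltbN mul0r.
rewrite big_nat_recr //= outer_last0 addr0 (eq_big_nat _ _ inner_last) big_split /= IH.
rewrite [in RHS]big_nat_recr //= sumrB sumr_const_nat subn0.
have -> : \sum_(0 <= a < N) s a * (N.+1%:R - 1 - 2 * a%:R) =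
          \sum_(0 <= a < N) s a * (N%:R - 1 - 2 * a%:R) + \sum_(0 <= a < N) s a.
  by rewrite -big_split /=; apply: eq_bigr => a _; rewrite -natr1; ring.
by rewrite -mulr_natr -natr1; ring.
Qed.

Lemma eq0_of_prefix_sums (R : zmodType) n (u : 'I_n -> R) :
  (forall k, (k <= n)%N -> \sum_(i in [set i : 'I_n | (i < k)%N]) u i = 0) ->
  forall j, u j = 0.
Proof.
move=> prefix0 j; have := prefix0 j.+1 (ltn_ord j).
rewrite (bigD1 j) ?inE //= (eq_bigl [in [set i : 'I_n | (i < j)%N]]).
  by rewrite prefix0 ?addr0 // ltnW.
by move=> i; rewrite !inE -val_eqE /=; lia.
Qed.

Lemma expR_amgm_gap (R : realType) (a b : R) :
  expR a + expR b - 2 * expR ((a + b) / 2) = (expR (a / 2) - expR (b / 2)) ^+ 2.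
Proof.
have halves (x : R) : expR x = expR (x / 2) ^+ 2 by rewrite expr2 -expRD -splitr.
by rewrite (halves a) (halves b) [(a + b) / 2]mulrDl expRD; ring.
Qed.

Section SetMgf.
Variables (R : realType) (T : finType) (w : {set T} -> R).
Hypotheses (w_ge0 : forall X, 0 <= w X) (w_setC : forall X, w (~: X) = w X).
Hypothesis w_sum_gt0 : 0 < \sum_X w X.

Definition set_mgf (u : T -> R) : R := \sum_X w X * expR (\sum_(j in X) u j).

Local Notation gap u X :=
  ((expR ((\sum_(j in X) u j) / 2) - expR ((\sum_(j in ~: X) u j) / 2)) ^+ 2).

Lemma set_mgf_gap (u : T -> R) :
  2 * set_mgf u - 2 * expR ((\sum_j u j) / 2) * \sum_X w X = \sum_X w X * gap u X.
Proof.
have set_mgfC : set_mgf u = \sum_X w X * expR (\sum_(j in ~: X) u j).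
  by rewrite (reindex_inj (@setC_inj _)); apply: eq_bigr => X _; rewrite w_setC setCK.
have -> : 2 * set_mgf u =
    \sum_X w X * (expR (\sum_(j in X) u j) + expR (\sum_(j in ~: X) u j)).
  by rewrite mulr_natl mulr2n {2}set_mgfC -big_split; apply: eq_bigr => X _; rewrite mulrDr.
rewrite mulr_sumr -sumrB; apply: eq_bigr => X _.
by rewrite -(sumr_setC X u) -expR_amgm_gap; ring.
Qed.

Lemma set_mgf_ge (u : T -> R) : expR ((\sum_j u j) / 2) * \sum_X w X <= set_mgf u.
Proof.
have gap_ge0 : 0 <= \sum_X w X * gap u X.
  by apply: sumr_ge0 => X _; rewrite mulr_ge0 ?sqr_ge0.
have := set_mgf_gap u; lra.
Qed.

Let ln_expR_mul_sum (u : T -> R) :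
  ln (expR ((\sum_j u j) / 2) * \sum_X w X) = (\sum_j u j) / 2 + ln (\sum_X w X).
Proof. by rewrite lnM ?posrE ?expR_gt0 // expRK. Qed.

Let set_mgf_gt0 (u : T -> R) : 0 < set_mgf u.
Proof. by apply: lt_le_trans (set_mgf_ge u); rewrite mulr_gt0 ?expR_gt0. Qed.

Lemma ln_set_mgf_ge (u : T -> R) :
  (\sum_j u j) / 2 + ln (\sum_X w X) <= ln (set_mgf u).
Proof.
by rewrite -ln_expR_mul_sum ler_ln ?posrE ?set_mgf_ge ?mulr_gt0 ?expR_gt0.
Qed.

Lemma ln_set_mgf_eq (u : T -> R) (X : {set T}) :
  ln (set_mgf u) <= (\sum_j u j) / 2 + ln (\sum_X w X) -> 0 < w X ->
  \sum_(j in X) u j = \sum_(j in ~: X) u j.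
Proof.
rewrite -ln_expR_mul_sum ler_ln ?posrE ?set_mgf_gt0 ?mulr_gt0 ?expR_gt0 //.
move=> mgf_le wX_gt0.
have gaps0 : \sum_X w X * gap u X = 0.
  have mgf_eq : set_mgf u = expR ((\sum_j u j) / 2) * \sum_X w X.
    by apply/le_anti; rewrite mgf_le set_mgf_ge.
  by rewrite -set_mgf_gap mgf_eq; ring.
have /eqP := psumr_eq0P (fun Y _ => mulr_ge0 (w_ge0 Y) (sqr_ge0 _)) gaps0 (i := X) isT.
by rewrite mulf_eq0 gt_eqF //= sqrf_eq0 subr_eq0 => /eqP/expR_inj; lra.
Qed.

End SetMgf.

Section BlockSwap.
Variable n : nat.

(* Positions count from the top and k is the position of candidate m: the
   ranking (above m) m (below m) becomes (below m) m (above m). *)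
Definition swap_pos (k p : nat) : nat :=
  if (p < k)%N then (p + n.+1 - k)%N else if p == k then (n - k)%N else (p - k.+1)%N.

Lemma swap_pos_lt k p : (k <= n)%N -> (p <= n)%N -> (swap_pos k p < n.+1)%N.
Proof. by rewrite /swap_pos; case: (ssrnat.ltngtP p k); lia. Qed.

Lemma swap_pos_ltE k x y : (k <= n)%N -> (x <= n)%N -> (y <= n)%N -> x != y ->
  (swap_pos k x < swap_pos k y)%N =
  (if (x < k)%N then (y < k) && (x < y)
   else if x == k then (y < k) else (y <= k) || (x < y))%N.
Proof.
rewrite /swap_pos.
by case: (ssrnat.ltngtP x k); case: (ssrnat.ltngtP y k); case: (ssrnat.ltngtP x y); lia.
Qed.

Definition swap_ord (k p : 'I_n.+1) : 'I_n.+1 := inord (swap_pos k p).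

Lemma swap_ordE (k p : 'I_n.+1) : swap_ord k p = swap_pos k p :> nat.
Proof. by rewrite inordK // swap_pos_lt // -ltnS. Qed.

Lemma swap_ordK (k : 'I_n.+1) : cancel (swap_ord k) (swap_ord (rev_ord k)).
Proof.
move=> p; have := ltn_ord k; have := ltn_ord p; rewrite !ltnS => hp hk.
apply: val_inj; rewrite /= !swap_ordE /= /swap_pos.
by case: (ssrnat.ltngtP p k) => h1 /=; case: ssrnat.ltngtP => h2 /=; lia.
Qed.

Definition swap_perm (k : 'I_n.+1) : {perm 'I_n.+1} := perm (can_inj (swap_ordK k)).

Definition block_swap (r : {perm 'I_n.+1}) : {perm 'I_n.+1} :=
  r * swap_perm (r ord_max).

Lemma block_swapE r c : block_swap r c = swap_ord (r ord_max) (r c).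
Proof. by rewrite permM permE. Qed.

Lemma block_swap_max r : block_swap r ord_max = rev_ord (r ord_max).
Proof. by apply: val_inj; rewrite /= block_swapE swap_ordE /swap_pos ltnn eqxx subSS. Qed.

Lemma block_swapK : involutive block_swap.
Proof.
by move=> r; apply/permP => c; rewrite block_swapE block_swap_max block_swapE swap_ordK.
Qed.

Lemma candA_neq_max (j : 'I_n) : candA j != ord_max.
Proof. by rewrite -val_eqE /= neq_ltn ltn_ord. Qed.

Lemma above_block_swap r : above (block_swap r) = ~: above r.
Proof.
apply/setP => j; rewrite !inE block_swapE block_swap_max swap_ordE /= /swap_pos.
have : r (candA j) != r ord_max :> nat by rewrite val_eqE (inj_eq perm_inj) candA_neq_max.
have := ltn_ord (r (candA j)); have := ltn_ord (r ord_max).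
by case: (ssrnat.ltngtP (r (candA j)) (r ord_max)); lia.
Qed.

End BlockSwap.

Lemma kendall_refE (R : nzSemiRingType) k (r : {perm 'I_k}) :
  (kendall r (ref_rank k))%:R =
  \sum_(a : 'I_k) \sum_(b : 'I_k) (a < b)%N%:R * (r a < r b)%N%:R :> R.
Proof.
rewrite /kendall -sum1dep_card natr_sum big_mkcond /= pair_bigA /=.
apply: eq_bigr => -[a b] _ /=; rewrite !permE /=.
case: (ltnP a b) => hab /=; last by rewrite mul0r.
have -> : (k - a.+1 < k - b.+1)%N = false by have := ltn_ord b; lia.
by case: (r a < r b)%N; rewrite /= ?mul1r.
Qed.

Definition side (R : nzRingType) n (r : {perm 'I_n.+1}) (c : 'I_n.+1) : R :=
  (r ord_max < r c)%N%:R - (r c < r ord_max)%N%:R.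

Section KendallBlockSwap.
Variables (R : realFieldType) (n : nat) (r : {perm 'I_n.+1}).
Local Notation s := (side R r).
Local Notation d r := (kendall r (ref_rank n.+1))%:R.

Lemma side_max : s ord_max = 0.
Proof. by rewrite /side ltnn subrr. Qed.

Lemma block_swap_pair (a b : 'I_n.+1) : (a < b)%N ->
  (block_swap r a < block_swap r b)%N%:R - (r a < r b)%N%:R =
  (s a - s b) / 2 + (b == ord_max)%:R * s a / 2 :> R.
Proof.
move=> ltab; rewrite /side !block_swapE !swap_ordE.
have neq_ab : r a != r b :> nat.
  by rewrite val_eqE (inj_eq perm_inj) -val_eqE /= neq_ltn ltab.
have neq_am : r a != r ord_max :> nat.
  by rewrite val_eqE (inj_eq perm_inj) -val_eqE /= neq_ltn (leq_trans ltab) // -ltnS.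
have -> : (b == ord_max) = (r b == r ord_max :> nat).
  by rewrite val_eqE (inj_eq perm_inj).
have := ltn_ord (r a); have := ltn_ord (r b); have := ltn_ord (r ord_max).
move: (r a : nat) (r b : nat) (r ord_max : nat) neq_ab neq_am => x y k nxy nxk ltk lty ltx.
rewrite swap_pos_ltE //; try lia.
move: nxy nxk.
case: (ssrnat.ltngtP x k) => h1; case: (ssrnat.ltngtP y k) => h2;
  case: (ssrnat.ltngtP x y) => h3 //= _ _; first [exfalso; lia | lra].
Qed.

Lemma kendall_block_swap :
  d (block_swap r) - d r = \sum_(j < n) s (candA j) * (n.+1%:R - 2 * j%:R) / 2.
Proof.
have pairs (a b : 'I_n.+1) :
    (a < b)%N%:R * (block_swap r a < block_swap r b)%N%:R -
    (a < b)%N%:R * (r a < r b)%N%:R =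
    (a < b)%N%:R * (s a - s b) / 2 + (a < b)%N%:R * (b == ord_max)%:R * s a / 2.
  rewrite -mulrBr; case: (ltnP a b) => [ltab|_] /=; last ring.
  by rewrite block_swap_pair //; ring.
have to_max (a : 'I_n.+1) :
    \sum_(b : 'I_n.+1) (a < b)%N%:R * (b == ord_max)%:R * s a / 2 = s a / 2.
  rewrite (bigD1 ord_max) //= big1 ?addr0; last first.
    by move=> b /negbTE->; rewrite mulr0 !mul0r.
  rewrite eqxx mulr1; case: (eqVneq a ord_max) => [->|neq_am].
    by rewrite ltnn side_max /=; ring.
  have -> : (a < @ord_max n)%N by rewrite ltn_neqAle val_eqE neq_am -ltnS ltn_ord.
  by rewrite /=; ring.
have all_pairs :
    \sum_(a : 'I_n.+1) \sum_(b : 'I_n.+1) (a < b)%N%:R * (s a - s b) =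
    \sum_(a : 'I_n.+1) s a * (n%:R - 2 * a%:R).
  pose t i := s (inord i).
  have tE (a : 'I_n.+1) : t a = s a by rewrite /t inord_val.
  transitivity (\sum_(0 <= a < n.+1) \sum_(0 <= b < n.+1) (a < b)%N%:R * (t a - t b)).
    rewrite big_mkord; apply: eq_bigr => a _.
    by rewrite big_mkord; apply: eq_bigr => b _; rewrite !tE.
  rewrite sum_pairs_sub big_mkord; apply: eq_bigr => a _.
  by rewrite tE -natr1 addrK.
rewrite !kendall_refE -sumrB.
under eq_bigr => a _ do
  rewrite -sumrB (eq_bigr _ (fun b _ => pairs a b)) big_split /= to_max.
rewrite big_split /=; under eq_bigr do rewrite -mulr_suml.
rewrite -mulr_suml all_pairs mulr_suml -big_split big_ord_recr /= side_max.
rewrite !mul0r !addr0; apply: eq_bigr => j _.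
by rewrite -natr1; ring.
Qed.

End KendallBlockSwap.

Lemma mallows_prob_gt0 (R : realType) k (rho : R) (r : {perm 'I_k}) :
  0 < mallows_prob rho r.
Proof.
rewrite divr_gt0 ?expR_gt0 // (@psumr_gt0 _ _ _ 1%g) ?expR_gt0 // => s.
by rewrite ltW ?expR_gt0.
Qed.

Section MallowsTilt.
Variables (R : realType) (n : nat) (rho : R).
Local Notation d r := (kendall r (ref_rank n.+1))%:R.

Definition tau (j : 'I_n) : R := (n.+1%:R - 2 * j%:R) * rho / 2.

Lemma sum_tau_setC r :
  \sum_(j in ~: above r) tau j - \sum_(j in above r) tau j =
  \sum_j tau j * side R r (candA j).
Proof.
rewrite (big_mkcond [in ~: above r]) (big_mkcond [in above r]) -sumrB.
apply: eq_bigr => j _; rewrite !inE /side.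
have : r (candA j) != r ord_max :> nat by rewrite val_eqE (inj_eq perm_inj) candA_neq_max.
by case: (ssrnat.ltngtP (r (candA j)) (r ord_max)) => //= _ _; ring.
Qed.

Lemma mallows_exponent_block_swap r :
  - rho * d (block_swap r) + \sum_(j in ~: above r) tau j =
  - rho * d r + \sum_(j in above r) tau j.
Proof.
have swap_cost : rho * (d (block_swap r) - d r) =
    \sum_(j in ~: above r) tau j - \sum_(j in above r) tau j.
  rewrite kendall_block_swap sum_tau_setC mulr_sumr.
  by apply: eq_bigr => j _; rewrite /tau; ring.
lra.
Qed.

Definition tilted_pX (X : {set 'I_n}) : R := pX rho X * expR (\sum_(j in X) tau j).

Lemma tilted_pX_setC X : tilted_pX (~: X) = tilted_pX X.
Proof.
rewrite /tilted_pX /pX (reindex_inj (inv_inj (@block_swapK n))) /=.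
rewrite (eq_bigl (fun r => above r == X)); last first.
  by move=> r; rewrite above_block_swap (inj_eq (@setC_inj _)).
rewrite !mulr_suml; apply: eq_bigr => r /eqP <-.
by rewrite /mallows_prob mulrAC [RHS]mulrAC -!expRD mallows_exponent_block_swap.
Qed.

Lemma tilted_pX_ge0 X : 0 <= tilted_pX X.
Proof.
by rewrite mulr_ge0 ?expR_ge0 // sumr_ge0 // => r _; rewrite ltW ?mallows_prob_gt0.
Qed.

Lemma tilted_pX_above_gt0 r : 0 < tilted_pX (above r).
Proof.
rewrite mulr_gt0 ?expR_gt0 // /pX (bigD1 r) //= ltr_wpDr ?mallows_prob_gt0 //.
by rewrite sumr_ge0 // => s _; rewrite ltW ?mallows_prob_gt0.
Qed.

Lemma tilted_pX_sum_gt0 : 0 < \sum_(X : {set 'I_n}) tilted_pX X.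
Proof. exact: psumr_gt0 tilted_pX_ge0 (tilted_pX_above_gt0 1%g). Qed.

End MallowsTilt.

Lemma prefix_above n k : (k <= n)%N ->
  exists r : {perm 'I_n.+1}, above r = [set i : 'I_n | (i < k)%N].
Proof.
rewrite leq_eqVlt => /orP[/eqP-> | ltkn].
  by exists 1%g; apply/setP => j; rewrite !inE !perm1 /= ltn_ord.
exists (tperm (candA (Ordinal ltkn)) ord_max); apply/setP => i; rewrite !inE tpermR.
case: (eqVneq i (Ordinal ltkn)) => [->|neq_ik].
  by rewrite tpermL /= ltnn ltnNge ltnW.
rewrite tpermD // ?(eq_sym ord_max) ?candA_neq_max //.
by apply: contra neq_ik => /eqP/(congr1 val) /= eq_ik; apply/eqP/val_inj; rewrite /= eq_ik.
Qed.

Section LogSaddlePoint.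
Variables (R : realType) (n : nat) (rho : R).
Local Notation tau := (@tau R n rho).
Local Notation w := (@tilted_pX R n rho).
Local Notation u t := (fun j => t j - tau j).

Lemma saddle_objE (t : 'I_n -> R) : saddle_obj rho (fun _ => 1 / 2) t =
  - ln (set_mgf w (u t)) + (\sum_j u t j) / 2 + (\sum_j tau j) / 2.
Proof.
have PpolyE : Ppoly rho (fun j => expR (t j)) = set_mgf w (u t).
  apply: eq_bigr => X _; rewrite /tilted_pX -expR_sum -mulrA -expRD sumrB.
  by congr (_ * expR _); ring.
rewrite /saddle_obj /Kcgf PpolyE -mulr_sumr sumrB; ring.
Qed.

Lemma saddle_obj_tau :
  saddle_obj rho (fun _ => 1 / 2) tau = - ln (\sum_X w X) + (\sum_j tau j) / 2.
Proof.
have sum_u0 : \sum_j (tau j - tau j) = 0 by rewrite big1 // => j _; rewrite subrr.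
have mgf_u0 : set_mgf w (u tau) = \sum_X w X.
  by apply: eq_bigr => X _; rewrite big1 ?expR0 ?mulr1 // => j _; rewrite subrr.
by rewrite saddle_objE sum_u0 mgf_u0 mul0r addr0.
Qed.

Lemma tau_is_log_saddle_point : is_log_saddle_point rho (fun _ => 1 / 2) tau.
Proof.
have w_ge0 := @tilted_pX_ge0 R n rho; have w_setC := @tilted_pX_setC R n rho.
have ln_mgf_ge := ln_set_mgf_ge w_ge0 w_setC (tilted_pX_sum_gt0 _ _).
have ln_mgf_eq := ln_set_mgf_eq w_ge0 w_setC (tilted_pX_sum_gt0 _ _).
split=> [t | t t_max].
  by rewrite saddle_obj_tau saddle_objE; have := ln_mgf_ge (u t); lra.
have ln_mgf_le : ln (set_mgf w (u t)) <= (\sum_j u t j) / 2 + ln (\sum_X w X).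
  by have := t_max tau; rewrite saddle_obj_tau saddle_objE; lra.
have half_sum r : \sum_(j in above r) u t j = (\sum_j u t j) / 2.
  have := sumr_setC (above r) (u t).
  by rewrite -(ln_mgf_eq _ _ ln_mgf_le (tilted_pX_above_gt0 rho r)); lra.
have prefix_half k : (k <= n)%N ->
    \sum_(i in [set i : 'I_n | (i < k)%N]) u t i = (\sum_j u t j) / 2.
  by move=> /prefix_above[r <-]; apply: half_sum.
move=> j; apply/eqP; rewrite -subr_eq0; apply/eqP; move: j.
apply: eq0_of_prefix_sums => k /prefix_half ->.
by rewrite -(prefix_half 0%N) // big_pred0 // => i; rewrite inE.
Qed.

End LogSaddlePoint.

Theorem lemma3 (R : realType) (m : nat) (hm : (2 <= m)%N) (rho : R) (hrho : 0 <= rho) :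
  is_log_saddle_point (n := m.-1) rho (fun _ => 1 / 2)
    (fun j => (m%:R - 2 * (j : nat)%:R) * rho / 2).
Proof.
by case: m hm => [|n] // _; apply: tau_is_log_saddle_point.
Qed.
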